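(* For every word $\omega\in[n]^*$, $B_\omega=\mathrm{Comp}_0(X_\omega)$, where \[X_\omega=\bigcap_{i=1}^n\{x\in\mathbb{Z}^n: 0\le e_i^T M_\omega x\le e_i^T u_\omega\}.\]
   Context: Let $[n]=\{1,\dots,n\}$, $e_1,\dots,e_n$ the standard basis of $\mathbb{Z}^n$; $\varepsilon$ is the empty word, $*$ concatenation. For words $\omega$ over $[n]$ define recursively $\delta^i_\omega\in\mathbb{Z}^n$: $\delta^i_\varepsilon=e_i$; $\delta^j_{\omega*j}=\delta^j_\omega$, $\delta^i_{\omega*j}=\delta^i_\omega-\delta^j_\omega$ for $i\ne j$. Let $B_\varepsilon=\{0\}$, $B_{\omega*j}=B_\omega+\{0,\delta^j_\omega\}$ (Minkowski sum). Let $M_\omega=(\delta^1_\omega\ \cdots\ \delta^n_\omega)^{-1}$ (inverse of the matrix with columns $\delta^i_\omega$). For $k\in[n]$ let $D^k=\mathrm{id}+e_k(\mathbb{1}-e_k)^T$ with $\mathbb{1}=(1,\dots,1)^T$. Define $u_\varepsilon=0$, $u_{\omega*j}=e_j+D^j u_\omega$. A subset of $\mathbb{Z}^n$ is regarded as a graph by joining two elements iff their Euclidean distance is $1$; for $X\subseteq\mathbb{Z}^n$, $\mathrm{Comp}_0(X)$ denotes the connected component of $X$ containing $0$. *)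

(* Vectors of Z^n are column vectors 'cV[int]_n; indices [n] are 'I_n;
   words over [n] are seq 'I_n, with omega*j = rcons omega j. *)
From HB Require Import structures.
From mathcomp Require Import all_boot all_order all_algebra.
Set Implicit Arguments. Unset Strict Implicit. Unset Printing Implicit Defensive.
Import Order.TTheory GRing.Theory Num.Theory.
Local Open Scope ring_scope.

Definition evec n (i : 'I_n) : 'cV[int]_n := delta_mx i 0.

Definition delta_step n (d : 'I_n -> 'cV[int]_n) (j : 'I_n) : 'I_n -> 'cV[int]_n :=
  fun i => if i == j then d j else d i - d j.

Definition delta n (w : seq 'I_n) : 'I_n -> 'cV[int]_n :=
  foldl (@delta_step n) (@evec n) w.

(* B_w as a subset of Z^n (predicate), B_eps = {0}, B_{w*j} = B_w + {0, delta^j_w} *)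
Fixpoint Bset_rev n (r : seq 'I_n) : 'cV[int]_n -> Prop :=
  match r with
  | [::] => fun x => x = 0
  | j :: r' => fun x => Bset_rev r' x \/ Bset_rev r' (x - delta (rev r') j)
  end.
Definition Bset n (w : seq 'I_n) : 'cV[int]_n -> Prop := Bset_rev (rev w).

Definition Delta_mx n (w : seq 'I_n) : 'M[int]_n := \matrix_(i, k) delta w k i 0.
Definition M_mx n (w : seq 'I_n) : 'M[rat]_n := invmx (map_mx intr (Delta_mx w)).

Definition D_mx n (k : 'I_n) : 'M[int]_n :=
  1%:M + evec k *m (const_mx 1 - evec k)^T.

Definition u_step n (u : 'cV[int]_n) (j : 'I_n) : 'cV[int]_n := evec j + D_mx j *m u.
Definition uvec n (w : seq 'I_n) : 'cV[int]_n := foldl (@u_step n) 0 w.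

Definition Xset n (w : seq 'I_n) (x : 'cV[int]_n) : Prop :=
  forall i : 'I_n,
    0 <= (M_mx w *m map_mx intr x) i 0 /\ (M_mx w *m map_mx intr x) i 0 <= ((uvec w i 0)%:~R : rat).

(* two points of Z^n are adjacent iff their Euclidean distance is 1,
   i.e. the squared distance is 1 *)
Definition adj n (x y : 'cV[int]_n) : Prop := \sum_i (x i 0 - y i 0) ^+ 2 = 1.

(* vertices of X reachable from 0 inside X: the component of 0 (empty if 0 notin X) *)
Inductive Comp0 n (X : 'cV[int]_n -> Prop) : 'cV[int]_n -> Prop :=
  | Comp0_base : X 0 -> Comp0 X 0
  | Comp0_step x y : Comp0 X x -> X y -> adj x y -> Comp0 X y.

(* The proof is by induction on w, peeling off the FIRST letter.  Prepending a
   letter j conjugates everything by the unimodular matrix D^j: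
     - D^j delta^k_{j::w} = delta^k_w, so M_{j::w} = M_w D^j with M_w the
       entrywise nonnegative integer matrix D^{w_1} ... D^{w_m};
     - u_{j::w} = u_w + M_w e_j;
     - x in B_{j::w}  iff  D^j x in B_w  or  D^j x - e_j in B_w.
   Hence X_{j::w} = (D^j)^{-1} Y with Y = { z : 0 <= M_w z <= u_w + M_w e_j },
   and the induction step is a statement about a single box
   X = { z : 0 <= M z <= u } with M >= 0 and 0 in X (Section OneLetter):
   the preimage under D^j of  C U (C + e_j),  C the component of 0 in X, is the
   component of 0 in (D^j)^{-1} Y.  Since D^j maps the unit steps +-e_k to the
   "twisted" steps +-e_j (k = j) and +-(e_k + e_j) (k <> j), this amounts to
   (1) C U (C + e_j) is closed under twisted steps that stay in Y, and
   (2) every point of C U (C + e_j) is reached from 0 by such steps inside Y;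
   both follow from elementary sandwich inequalities for the box X, using M >= 0. *)
From mathcomp Require Import all_boot all_order all_algebra zify lra.
Set Implicit Arguments. Unset Strict Implicit. Unset Printing Implicit Defensive.
Import Order.TTheory GRing.Theory Num.Theory.
Local Open Scope ring_scope.

Section Coordinates.
Variable n : nat.
Implicit Types (x y : 'cV[int]_n) (j k : 'I_n).

Lemma addmxE (x y : 'cV[int]_n) i l : (x + y) i l = x i l + y i l.
Proof. by rewrite mxE. Qed.

Lemma evecE k i l : evec k i l = (i == k)%:R.
Proof. by rewrite /evec mxE (ord1 l) eqxx andbT. Qed.

Lemma sum_evec k : \sum_l evec k l 0 = 1.
Proof.
rewrite (bigD1 k) //= evecE eqxx big1 ?addr0 // => l Hl.
by rewrite evecE (negbTE Hl).
Qed.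

Lemma mulmx_evecE (M : 'M[int]_n) k i : (M *m evec k) i 0 = M i k.
Proof. by rewrite /evec -colE mxE. Qed.

Lemma D_mxE j x i : (D_mx j *m x) i 0 = if i == j then \sum_l x l 0 else x i 0.
Proof.
rewrite /D_mx mulmxDl mul1mx -mulmxA mxE [X in _ + X]mxE.
rewrite (bigD1 0) //= big1 ?addr0; last by move=> l; rewrite (ord1 l) eqxx.
rewrite evecE mxE.
have -> : \sum_l (const_mx 1 - evec j)^T 0 l * x l 0 = \sum_l x l 0 - x j 0.
  rewrite (bigD1 j) //= !mxE !eqxx /= subrr mul0r add0r.
  rewrite [X in _ = X - _](bigD1 j) //= addrC addrK.
  by apply: eq_bigr => l Hl; rewrite !mxE (negbTE Hl) subr0 mul1r.
case: eqP => [->|_]; last by rewrite mul0r addr0.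
by rewrite mul1r addrC subrK.
Qed.

Lemma D_mx_ge0 j i k : 0 <= D_mx j i k.
Proof.
rewrite /D_mx !mxE (bigD1 0) //= big1 ?addr0; last by move=> l; rewrite (ord1 l) eqxx.
by rewrite !mxE /= !andbT; case: (i == k); case: (i == j); case: (k == j).
Qed.

Lemma D_mx_inj j x y : D_mx j *m x = D_mx j *m y -> x = y.
Proof.
move=> Exy.
have Eoff i : i != j -> x i 0 = y i 0.
  by move=> Hij; have := congr1 (fun v : 'cV[int]_n => v i 0) Exy; rewrite !D_mxE (negbTE Hij).
apply/matrixP => i l; rewrite (ord1 l).
have [->|Hij] := eqVneq i j; last exact: Eoff.
have := congr1 (fun v : 'cV[int]_n => v j 0) Exy; rewrite !D_mxE eqxx.
rewrite (bigD1 j) //= [X in _ = X](bigD1 j) //= (eq_bigr (fun l => y l 0)) => [/addIr //|].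
exact: Eoff.
Qed.

Lemma D_mx_evec j k : D_mx j *m evec k = if k == j then evec j else evec k + evec j.
Proof.
apply/matrixP => i l; rewrite (ord1 l) D_mxE sum_evec.
have [->|Hij] := eqVneq i j.
  case: (eqVneq k j) => [_|Hkj]; first by rewrite evecE eqxx.
  by rewrite !mxE /= !andbT eqxx (eq_sym j k) (negbTE Hkj) add0r.
case: (eqVneq k j) => [->|Hkj] //.
by rewrite [RHS]mxE [evec j i 0]evecE (negbTE Hij) addr0.
Qed.

End Coordinates.

Definition box n (M : 'M[int]_n) (u z : 'cV[int]_n) : Prop :=
  forall i, 0 <= (M *m z) i 0 /\ (M *m z) i 0 <= u i 0.

Section Adjacency.
Variable n : nat.
Implicit Types (x y d : 'cV[int]_n) (k : 'I_n).

Lemma adj_sym x y : adj x y -> adj y x.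
Proof. by rewrite /adj => <-; apply: eq_bigr => i _; rewrite -sqrrN opprB. Qed.

Lemma adj_addr x k : adj x (x + evec k).
Proof.
rewrite /adj -(sum_evec k); apply: eq_bigr => i _.
rewrite !mxE /= andbT; case: (i == k); rewrite /= ?addr0; lia.
Qed.

Lemma adj_subr x k : adj x (x - evec k).
Proof.
rewrite /adj -(sum_evec k); apply: eq_bigr => i _.
rewrite !mxE /= andbT; case: (i == k); rewrite /= ?subr0; lia.
Qed.

Lemma sqnorm1P d : \sum_i d i 0 ^+ 2 = 1 -> exists k, d = evec k \/ d = - evec k.
Proof.
move=> Hd.
have [k Hk] : exists k, d k 0 != 0.
  apply/existsP; apply: contraTT (oner_neq0 int) => /existsPn Hz.
  by rewrite -Hd big1 // => i _; rewrite (eqP (negbNE (Hz i))) expr0n.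
have sq_ge0 (t : int) : 0 <= t ^+ 2 by rewrite sqr_ge0.
rewrite (bigD1 k) //= in Hd.
have Hk1 : 1 <= d k 0 ^+ 2 by move: Hk; rewrite expr2; move: (d k 0) => t; nia.
set rest := \sum_(i < n | i != k) _ in Hd.
have rest_ge0 : 0 <= rest by apply: sumr_ge0.
have Erest : rest = 0 by lia.
have Eoff i : i != k -> d i 0 = 0.
  by move=> Hi; apply/eqP; rewrite -sqrf_eq0 (psumr_eq0P (fun i _ => sq_ge0 _) Erest).
have Ed : d = d k 0 *: evec k.
  apply/matrixP => i l; rewrite (ord1 l) !mxE /= andbT.
  by case: eqVneq => [->|Hi]; rewrite ?mulr1 // mulr0 Eoff.
have /eqP : d k 0 ^+ 2 = 1 by move: Hd; rewrite Erest addr0.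
rewrite sqrf_eq1 => /orP[/eqP Ek1|/eqP Ek1]; exists k; rewrite Ed Ek1.
  by left; rewrite scale1r.
by right; rewrite scaleN1r.
Qed.

Lemma adjP x y : adj x y -> exists k, y = x + evec k \/ y = x - evec k.
Proof.
move=> Hxy; have [k Ek] : exists k, x - y = evec k \/ x - y = - evec k.
  by apply: sqnorm1P; rewrite -Hxy; apply: eq_bigr => i _; rewrite !mxE.
exists k; case: Ek => Ek; [right|left].
  by rewrite -Ek opprB addrC subrK.
by rewrite -[evec k]opprK -Ek opprB addrC subrK.
Qed.

Lemma Comp0_stepD (X : 'cV[int]_n -> Prop) x k : Comp0 X (x + evec k) -> X x -> Comp0 X x.
Proof. by move=> C Xx; apply: Comp0_step C Xx (adj_sym (adj_addr x k)). Qed.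

Lemma Comp0_stepB (X : 'cV[int]_n -> Prop) x k : Comp0 X (x - evec k) -> X x -> Comp0 X x.
Proof. by move=> C Xx; apply: Comp0_step C Xx (adj_sym (adj_subr x k)). Qed.

Lemma Comp0_sub (X : 'cV[int]_n -> Prop) x : Comp0 X x -> X x.
Proof. by case. Qed.

Lemma Comp0_ext (X Y : 'cV[int]_n -> Prop) :
  (forall x, X x <-> Y x) -> forall x, Comp0 X x <-> Comp0 Y x.
Proof.
suff sub (P Q : 'cV[int]_n -> Prop) : (forall x, P x -> Q x) -> forall x, Comp0 P x -> Comp0 Q x.
  by move=> E x; split; apply: sub => y /E.
move=> PQ x; elim=> [P0|x0 y _ IH Py Axy]; first by apply/Comp0_base/PQ.
exact: Comp0_step IH (PQ _ Py) Axy.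
Qed.

End Adjacency.

Section PrependLetter.
Variable n : nat.
Implicit Types (x : 'cV[int]_n) (j k : 'I_n) (w : seq 'I_n).

(* The integer matrix D^{w_1} ... D^{w_m}; it turns out to be M_w. *)
Definition Mint w : 'M[int]_n := foldr (fun j M => M *m D_mx j) 1%:M w.

Lemma Mint_ge0 w i k : 0 <= Mint w i k.
Proof.
elim: w i k => [|j w IH] i k /=; first by rewrite mxE; case: (i == k).
by rewrite mxE; apply: sumr_ge0 => l _; apply: mulr_ge0; [exact: IH | exact: D_mx_ge0].
Qed.

Lemma delta_linear (A : 'M[int]_n) w (d1 d2 : 'I_n -> 'cV[int]_n) :
  (forall i, d1 i = A *m d2 i) ->
  forall i, foldl (@delta_step n) d1 w i = A *m foldl (@delta_step n) d2 w i.
Proof.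
elim: w d1 d2 => [|j w IH] d1 d2 Hd i /=; first exact: Hd.
apply: IH => i0; rewrite /delta_step; case: (i0 == j); first exact: Hd.
by rewrite !Hd mulmxBr.
Qed.

(* delta^k_{j::w} = (D^j)^{-1} delta^k_w: the first step maps e_k to (D^j)^{-1} e_k. *)
Lemma delta_cons j w k : D_mx j *m delta (j :: w) k = delta w k.
Proof.
rewrite /delta /=; symmetry; apply: delta_linear => i.
rewrite /delta_step; have [->|Hij] := eqVneq i j; first by rewrite D_mx_evec eqxx.
by rewrite mulmxBr !D_mx_evec eqxx (negbTE Hij) addrK.
Qed.

Lemma Mint_Delta w : Mint w *m Delta_mx w = 1%:M.
Proof.
elim: w => [|j w IH] /=.
  by rewrite mul1mx; apply/matrixP => i k; rewrite !mxE andbT.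
have Delta_cons : D_mx j *m Delta_mx (j :: w) = Delta_mx w.
  apply/matrixP => i k; rewrite [RHS]mxE -(delta_cons j w k) !mxE.
  by apply: eq_bigr => l _; rewrite [Delta_mx _ _ _]mxE.
by rewrite -mulmxA Delta_cons.
Qed.

Lemma M_mxE w : M_mx w = map_mx intr (Mint w).
Proof.
have inv : map_mx intr (Mint w) *m map_mx intr (Delta_mx w) = 1%:M :> 'M[rat]_n.
  by rewrite -map_mxM Mint_Delta map_mx1.
have [_ unitDelta] := mulmx1_unit inv.
by rewrite /M_mx -[RHS]mulmx1 -(mulmxV unitDelta) mulmxA inv mul1mx.
Qed.

Lemma XsetE w x : Xset w x <-> box (Mint w) (uvec w) x.
Proof.
rewrite /Xset /box M_mxE -map_mxM.
by split => H i; have := H i; rewrite !mxE ler0z ler_int.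
Qed.

(* Unfolding the u-recursion from an arbitrary start v; at v = e_j this gives
   u_{j::w} = u_w + M_w e_j. *)
Lemma foldl_uvec w v : foldl (@u_step n) v w = uvec w + Mint w *m v.
Proof.
elim: w v => [|j w IH] v /=; first by rewrite /uvec /= add0r mul1mx.
by rewrite /uvec /= !IH /u_step mulmx0 addr0 mulmxDr -addrA -mulmxA.
Qed.

Lemma uvec_cons j w : uvec (j :: w) = uvec w + Mint w *m evec j.
Proof. by rewrite {1}/uvec /= foldl_uvec /u_step mulmx0 addr0. Qed.

(* B is defined along the reversed word; the last element of the reversed word
   is the first letter of w. *)
Lemma Bset_rev_rcons r j x :
  Bset_rev (rcons r j) x <->
  Bset_rev r (D_mx j *m x) \/ Bset_rev r (D_mx j *m x - evec j).
Proof.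
elim: r x => [|k r IH] x /=.
  have D_eq0 (v : 'cV[int]_n) : D_mx j *m v = 0 <-> v = 0.
    split=> [Hv|->]; last by rewrite mulmx0.
    by apply: (@D_mx_inj _ j); rewrite Hv mulmx0.
  by rewrite /delta /= -D_eq0 -[X in _ \/ X <-> _]D_eq0 mulmxBr D_mx_evec eqxx.
rewrite !IH rev_rcons mulmxBr delta_cons [_ - _ - evec j]addrAC.
tauto.
Qed.

Lemma Bset_cons j w x :
  Bset (j :: w) x <-> Bset w (D_mx j *m x) \/ Bset w (D_mx j *m x - evec j).
Proof. by rewrite /Bset rev_cons Bset_rev_rcons. Qed.

Lemma Bset0 w : Bset w 0.
Proof. by rewrite /Bset; elim: (rev w) => [|k r IH] /=; [|left]. Qed.

End PrependLetter.

Section OneLetter.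
Variable n : nat.
Variables (M : 'M[int]_n) (u : 'cV[int]_n) (j : 'I_n).
Hypothesis M_ge0 : forall i k, 0 <= M i k.
Hypothesis box0 : box M u 0.
Implicit Types (b c x y z : 'cV[int]_n) (k : 'I_n).

Local Notation X := (box M u).
Local Notation C := (Comp0 (box M u)).
Local Notation Y := (box M (u + M *m evec j)).
Local Notation Ypre := (fun x => box M (u + M *m evec j) (D_mx j *m x)).

Definition mle y z := forall i, (M *m y) i 0 <= (M *m z) i 0.

Lemma mle_refl y : mle y y.
Proof. by []. Qed.

Lemma mle_addr y k : mle y (y + evec k).
Proof. by move=> i; rewrite mulmxDr addmxE mulmx_evecE lerDl M_ge0. Qed.

Lemma mle_subr y k : mle (y - evec k) y.
Proof. by have := mle_addr (y - evec k) k; rewrite subrK. Qed.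

Lemma box_above b c y : X b -> Y c -> mle b y -> mle (y + evec j) c -> X y.
Proof.
move=> Xb Yc Hby Hyc i; have := Xb i; have := Yc i; have := Hby i; have := Hyc i.
by rewrite mulmxDr !addmxE !mulmx_evecE; lra.
Qed.

Lemma box_below b c y : X b -> Y c -> mle c y -> mle y b -> X y.
Proof.
move=> Xb Yc Hcy Hyb i; have := Xb i; have := Yc i; have := Hcy i; have := Hyb i.
by rewrite !addmxE !mulmx_evecE; lra.
Qed.

Lemma box_sub_Y z : X z -> Y z /\ Y (z + evec j).
Proof.
move=> Xz; split=> i; have := Xz i; have := M_ge0 i j;
  by rewrite ?mulmxDr !addmxE !mulmx_evecE; lra.
Qed.

Definition twin z := exists2 b, C b & (z = b \/ z = b + evec j).

Lemma twinE z : twin z <-> C z \/ C (z - evec j).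
Proof.
split=> [[b Cb [->|->]]|[Cz|Cz]]; [by left | by right; rewrite addrK | by exists z => //; left |].
by exists (z - evec j) => //; right; rewrite subrK.
Qed.

Lemma twin_stepD z k : twin z -> Y (z + D_mx j *m evec k) -> twin (z + D_mx j *m evec k).
Proof.
move=> [b Cb [->|->]]; have Xb := Comp0_sub Cb; rewrite D_mx_evec; case: eqVneq => [_|Hkj] /= Yz.
- by exists b => //; right.
- rewrite addrA in Yz *.
  have Cb1 : C (b + evec k).
    exact: Comp0_step Cb (box_above Xb Yz (mle_addr b k) (mle_refl _)) (adj_addr b k).
  by exists (b + evec k) => //; right.
- have Cb1 : C (b + evec j).
    exact: Comp0_step Cb (box_above Xb Yz (mle_addr b j) (mle_refl _)) (adj_addr b j).
  by exists (b + evec j) => //; right.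
- rewrite addrA (addrAC b) in Yz *.
  have Cb1 : C (b + evec k).
    exact: Comp0_step Cb (box_above Xb Yz (mle_addr b k) (mle_addr _ j)) (adj_addr b k).
  have Cb2 : C (b + evec k + evec j).
    exact: Comp0_step Cb1 (box_above (Comp0_sub Cb1) Yz (mle_addr _ j) (mle_refl _)) (adj_addr _ j).
  by exists (b + evec k + evec j) => //; right.
Qed.

Lemma twin_stepB z k : twin z -> Y (z - D_mx j *m evec k) -> twin (z - D_mx j *m evec k).
Proof.
move=> [b Cb [->|->]]; have Xb := Comp0_sub Cb; rewrite D_mx_evec; case: eqVneq => [_|Hkj] /= Yz.
- have Cb1 : C (b - evec j).
    exact: Comp0_step Cb (box_below Xb Yz (mle_refl _) (mle_subr b j)) (adj_subr b j).
  by exists (b - evec j) => //; left.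
- rewrite opprD addrA in Yz *.
  have Cb1 : C (b - evec k).
    exact: Comp0_step Cb (box_below Xb Yz (mle_subr _ j) (mle_subr b k)) (adj_subr b k).
  have Cb2 : C (b - evec k - evec j).
    exact: Comp0_step Cb1 (box_below (Comp0_sub Cb1) Yz (mle_refl _) (mle_subr _ j)) (adj_subr _ j).
  by exists (b - evec k - evec j) => //; left.
- by rewrite addrK; exists b => //; left.
- rewrite opprD addrA (addrAC b) addrK in Yz *.
  have Cb1 : C (b - evec k).
    exact: Comp0_step Cb (box_below Xb Yz (mle_refl _) (mle_subr b k)) (adj_subr b k).
  by exists (b - evec k) => //; left.
Qed.

Lemma twin_of_reach x : Comp0 Ypre x -> twin (D_mx j *m x).
Proof.
elim=> [_|x0 y _ IH Yy /adjP[k Ey]].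
  by exists 0; [exact: Comp0_base | left; rewrite mulmx0].
case: Ey Yy => -> /=; [rewrite mulmxDr; exact: twin_stepD | rewrite mulmxBr; exact: twin_stepB].
Qed.

Lemma reach_shift z : C z -> (forall x, D_mx j *m x = z -> Comp0 Ypre x) ->
  forall x, D_mx j *m x = z + evec j -> Comp0 Ypre x.
Proof.
move=> Cz Hz x Ex; apply: (Comp0_stepB (k := j)).
  by apply: Hz; rewrite mulmxBr D_mx_evec eqxx Ex addrK.
by rewrite /= Ex; exact: (box_sub_Y (Comp0_sub Cz)).2.
Qed.

(* Induction along a path in C: a step z0 -> z0 + e_k (k <> j) is realised by the
   twisted steps +(e_k + e_j), -e_j, and z0 -> z0 - e_k (k <> j) by -(e_k + e_j)
   from the preimage of z0 + e_j. *)
Lemma reach_of_comp z : C z -> forall x, D_mx j *m x = z -> Comp0 Ypre x.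
Proof.
elim=> {z} [X0|z0 z Cz0 IH Xz /adjP[k Ez]] x Ex.
  have -> : x = 0 by apply: (@D_mx_inj _ j); rewrite Ex mulmx0.
  by apply: Comp0_base; rewrite /= mulmx0; exact: (box_sub_Y X0).1.
have IHshift := reach_shift Cz0 IH.
have Yx : Ypre x by rewrite /= Ex; exact: (box_sub_Y Xz).1.
case: Ez => Ez; rewrite {z}Ez in Ex Xz *; have [Ekj|Hkj] := eqVneq k j.
- by subst k; exact: IHshift.
- have Yq : Ypre (x + evec j) by rewrite /= mulmxDr D_mx_evec eqxx Ex; exact: (box_sub_Y Xz).2.
  apply: Comp0_stepD (Comp0_stepB (k := k) (IH _ _) Yq) Yx.
  by rewrite mulmxBr mulmxDr Ex !D_mx_evec eqxx (negbTE Hkj) -[z0 + _ + _]addrA addrK.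
- subst k; apply: (Comp0_stepD (k := j)) (IH _ _) Yx.
  by rewrite mulmxDr D_mx_evec eqxx Ex subrK.
- apply: (Comp0_stepD (k := k)) (IHshift _ _) Yx.
  by rewrite mulmxDr D_mx_evec (negbTE Hkj) Ex addrA subrK.
Qed.

Lemma one_letter x :
  C (D_mx j *m x) \/ C (D_mx j *m x - evec j) <-> Comp0 Ypre x.
Proof.
split=> [[Cz|Cz]|/twin_of_reach/twinE //]; first exact: (reach_of_comp Cz erefl).
by apply: (reach_shift Cz (reach_of_comp Cz)); rewrite subrK.
Qed.

End OneLetter.

Lemma Bset_box n (w : seq 'I_n) x : Bset w x <-> Comp0 (box (Mint w) (uvec w)) x.
Proof.
elim: w x => [|j w IH] x.
  have box_nil y : box (Mint [::]) (uvec [::]) y <-> y = 0.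
    rewrite /box /= mul1mx /uvec /=; split=> [Hy|-> i]; last by rewrite !mxE.
    by apply/matrixP => i l; rewrite (ord1 l); have := Hy i; rewrite !mxE; lra.
  rewrite /Bset /=; split=> [->|/Comp0_sub/box_nil //].
  by apply/Comp0_base/box_nil.
have box0 : box (Mint w) (uvec w) 0 := Comp0_sub ((IH 0).1 (Bset0 w)).
rewrite Bset_cons !IH (one_letter j (@Mint_ge0 n w) box0).
by apply: Comp0_ext => y; rewrite /box uvec_cons /= mulmxA.
Qed.

Theorem corollary3p6 (n : nat) (w : seq 'I_n) (x : 'cV[int]_n) :
  Bset w x <-> Comp0 (Xset w) x.
Proof. by rewrite Bset_box; apply: Comp0_ext => y; rewrite XsetE. Qed.
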